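(* Let $(\Sigma,E)$ be an algebraic theory with free monad $(T,\eta,\mu)$. Let $G:\mathbf{EM_s}(T)\to\mathbf{Alg}(\Sigma^{\mathrm{s}},E^{\mathrm{s}})$ send a $T$-semialgebra $(X,\alpha)$ to the algebra on $X$ interpreting $\mathsf{a}$ as $\alpha\circ\eta_X$ and each $(\mathsf{op}:n)\in\Sigma$ as $\alpha\circ\mathsf{op}^{TX}\circ(\eta_X)^n$, and act as the identity on morphisms. Let $H:\mathbf{Alg}(\Sigma^{\mathrm{s}},E^{\mathrm{s}})\to\mathbf{EM_s}(T)$ send $(X,I)$ to $(X,\alpha)$ with $\alpha(\overline{t})=I(t)_{I(\mathsf{a})}$, and act as the identity on morphisms. Then $G$ and $H$ are mutually inverse functors.
   Context: $T=T_{\Sigma,E}$: $TX$ is the set of $\Sigma$-terms over $X$ modulo the smallest congruence containing all substitution instances of $E$, with $\mathsf{op}^{TX}(\overline{t_1},\dots,\overline{t_n})=\overline{\mathsf{op}(t_1,\dots,t_n)}$, $\eta_X(x)=\overline{x}$, $\mu_X$ flattening terms. $\mathbf{EM_s}(T)$ is the category of $T$-semialgebras (maps $\alpha:TX\to X$ with $\alpha\circ\mu_X=\alpha\circ T\alpha$) and maps $f$ with $f\circ\alpha=\beta\circ Tf$. $\mathbf{Alg}(\Sigma^{\mathrm{s}},E^{\mathrm{s}})$ is the category of $(\Sigma^{\mathrm{s}},E^{\mathrm{s}})$-algebras, where $\Sigma^{\mathrm{s}}=\Sigma\uplus\{\mathsf{a}:1\}$ and $E^{\mathrm{s}}$ consists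 of $\mathsf{a}\mathsf{a}v_1=\mathsf{a}v_1$; $\mathsf{a}(\mathsf{op}(v_1,\dots,v_n))=\mathsf{op}(v_1,\dots,v_n)$ and $\mathsf{op}(\mathsf{a}v_1,\dots,\mathsf{a}v_n)=\mathsf{op}(v_1,\dots,v_n)$ for every $(\mathsf{op}:n)\in\Sigma$; and $t(\mathsf{a}v_1,\dots,\mathsf{a}v_n)=s(\mathsf{a}v_1,\dots,\mathsf{a}v_n)$ for every equation $t=s$ in $E$. $I(t)_{I(\mathsf{a})}$ is the value of the $\Sigma$-term $t$ over $X$ obtained by sending each element $x$ occurring as a variable to $I(\mathsf{a})(x)$ and interpreting operations via $I$. (It is part of the setting that $G$ and $H$ are well-defined functors.) *)

From mathcomp Require Import all_boot.
Set Implicit Arguments.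
Unset Strict Implicit.
Unset Printing Implicit Defensive.

Section Terms.
Variables (O : Type) (ar : O -> nat).

Inductive term (X : Type) : Type :=
| Var : X -> term X
| Op : forall o : O, ('I_(ar o) -> term X) -> term X.

Arguments Var {X}.
Arguments Op {X}.

Fixpoint tmap (X Y : Type) (f : X -> Y) (t : term X) : term Y :=
  match t with
  | Var x => Var (f x)
  | Op o ts => Op o (fun i => tmap f (ts i))
  end.

Fixpoint tsubst (X Y : Type) (s : X -> term Y) (t : term X) : term Y :=
  match t with
  | Var x => s x
  | Op o ts => Op o (fun i => tsubst s (ts i))
  end.

(* mu on representatives: flattening of terms of terms. *)
Definition tjoin (X : Type) (u : term (term X)) : term X := tsubst id u.

Fixpoint teval (X Y : Type) (I : forall o : O, ('I_(ar o) -> X) -> X)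
    (rho : Y -> X) (t : term Y) : X :=
  match t with
  | Var y => rho y
  | Op o ts => I o (fun i => teval I rho (ts i))
  end.

Variables (V : Type) (E : term V -> term V -> Prop).

(* The smallest congruence on term X containing all substitution
   instances of E; T X is term X modulo teq. *)
Inductive teq (X : Type) : term X -> term X -> Prop :=
| teq_refl t : teq t t
| teq_sym t s : teq t s -> teq s t
| teq_trans t s r : teq t s -> teq s r -> teq t r
| teq_cong o (ts ss : 'I_(ar o) -> term X) :
    (forall i, teq (ts i) (ss i)) -> teq (Op o ts) (Op o ss)
| teq_inst (l r : term V) (sigma : V -> term X) :
    E l r -> teq (tsubst sigma l) (tsubst sigma r).

(* A T-semialgebra on X, with T X represented as term X modulo teq:
   a map alpha : T X -> X is a map on terms constant on teq-classes;
   the law alpha o mu_X = alpha o T alpha is checked on representatives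
   of T (T X), i.e. on terms over terms. *)
Definition is_semialg (X : Type) (alpha : term X -> X) : Prop :=
  (forall t s, teq t s -> alpha t = alpha s) /\
  (forall u : term (term X), alpha (tjoin u) = alpha (tmap alpha u)).

(* A (Sigma^s, E^s)-algebra on X: interpretation a of the new unary symbol
   and I of the symbols of Sigma, satisfying E^s. *)
Definition is_salg (X : Type) (a : X -> X)
    (I : forall o : O, ('I_(ar o) -> X) -> X) : Prop :=
  [/\ (forall x, a (a x) = a x),
      (forall o xs, a (I o xs) = I o xs),
      (forall o xs, I o (fun i => a (xs i)) = I o xs)
    & (forall l r, E l r -> forall rho : V -> X,
         teval I (fun v => a (rho v)) l = teval I (fun v => a (rho v)) r)].

(* The functor G on objects: a := alpha o eta_X,
   op := alpha o op^{TX} o (eta_X)^n. *)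
Definition G_a (X : Type) (alpha : term X -> X) : X -> X :=
  fun x => alpha (Var x).
Definition G_op (X : Type) (alpha : term X -> X) :
    forall o : O, ('I_(ar o) -> X) -> X :=
  fun o xs => alpha (Op o (fun i => Var (xs i))).

(* The functor H on objects: alpha(t) := I(t)_{I(a)}. *)
Definition H_alpha (X : Type) (a : X -> X)
    (I : forall o : O, ('I_(ar o) -> X) -> X) : term X -> X :=
  fun t => teval I a t.

End Terms.

Arguments G_op {O ar X} alpha o xs.
Arguments Var {O ar X}.
Arguments Op {O ar X}.

From mathcomp Require Import all_boot.

(* For H o G, the semialgebra law applied to the term of terms [op(eta t_1, ..., eta t_n)]
   says that a semialgebra evaluates [op(t_1, ..., t_n)] by first evaluating the [t_i] and
   then applying the derived operation [G_op alpha op]; structural induction then shows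
   that [alpha] is the evaluation of terms in [G(alpha)], i.e. [H(G(alpha)) = alpha].
   For G o H, the derived unary symbol is [I(a)] on the nose, and the derived operation
   is [I(op) o I(a)^n], which equals [I(op)] by the axiom [op(a v_1, ..., a v_n) = op(v)]. *)

Section SemialgebraToAlgebra.

Variables (O : Type) (ar : O -> nat) (V : Type) (E : term ar V -> term ar V -> Prop).
Variables (X : Type) (alpha : term ar X -> X).

(* Compatibility with [teq] replaces function extensionality here. *)
Lemma eq_G_op (alpha_teq : forall t s, teq E t s -> alpha t = alpha s)
    o (xs ys : 'I_(ar o) -> X) :
  (forall i, xs i = ys i) -> G_op alpha o xs = G_op alpha o ys.
Proof.
move=> eq_xs_ys; apply: alpha_teq; apply: teq_cong => i.
by rewrite eq_xs_ys; apply: teq_refl.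
Qed.

Hypothesis alpha_semialg : is_semialg E alpha.

Lemma semialg_Op o (ts : 'I_(ar o) -> term ar X) :
  alpha (Op o ts) = G_op alpha o (fun i => alpha (ts i)).
Proof. by have /= := alpha_semialg.2 (Op o (fun i => Var (ts i))). Qed.

Lemma H_G_alpha (t : term ar X) : H_alpha (G_a alpha) (G_op alpha) t = alpha t.
Proof.
elim: t => [x|o ts IHts] //=.
rewrite semialg_Op; apply: eq_G_op => //; exact: alpha_semialg.1.
Qed.

End SemialgebraToAlgebra.

Theorem lemma16 (O : Type) (ar : O -> nat) (V : Type)
    (E : term ar V -> term ar V -> Prop) :
  (* H o G = Id on objects (both functors are the identity on morphisms) *)
  (forall (X : Type) (alpha : term ar X -> X),
     is_semialg E alpha ->
     forall t : term ar X, H_alpha (G_a alpha) (G_op alpha) t = alpha t) /\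
  (* G o H = Id on objects *)
  (forall (X : Type) (a : X -> X) (I : forall o : O, ('I_(ar o) -> X) -> X),
     is_salg E a I ->
     (forall x, G_a (H_alpha a I) x = a x) /\
     (forall o (xs : 'I_(ar o) -> X), G_op (H_alpha a I) o xs = I o xs)).
Proof.
split=> [X alpha alpha_semialg t | X a I [_ _ I_a _]].
- exact: H_G_alpha alpha_semialg t.
- split=> // o xs; exact: I_a.
Qed.
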